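(* Let $n'$ be an odd positive integer and $q\ge 3$. There exists an ordering of all words of $\mathbb{Z}_q^{n'}$ in which consecutive words have Lee distance $1$, beginning with $(0,0,\ldots,0)$ and ending with $(1,1,\ldots,1)$.
   Context: Lee distance between $v,u\in\mathbb{Z}_q^{n'}$ is $\sum_{i}\min\{|v_i-u_i|,q-|v_i-u_i|\}$, entries regarded as integers in $\{0,\ldots,q-1\}$. *)

From mathcomp Require Import all_boot.
Set Implicit Arguments. Unset Strict Implicit. Unset Printing Implicit Defensive.

Definition word (q n : nat) := (n.-tuple 'I_q)%type.

Definition lee_sym (q : nat) (a b : 'I_q) : nat :=
  let d := (if a <= b then b - a else a - b)%N in minn d (q - d).

Definition lee_dist (q n : nat) (v u : word q n) : nat :=
  \sum_(i < n) lee_sym (tnth v i) (tnth u i).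

Definition is_const_word (q n : nat) (c : nat) (w : word q n) : bool :=
  [forall i, nat_of_ord (tnth w i) == c].

From mathcomp Require Import all_boot zify.
Set Implicit Arguments. Unset Strict Implicit. Unset Printing Implicit Defensive.

(* A listing of Z_q^n with consecutive Lee distance 1 is a Hamiltonian path in
   the n-th Cartesian power of the q-cycle, and 0, q-1, ..., 2, 1 is such a path
   from 0 to 1 in Z_q.  If O and I are Hamiltonian paths of X and Y, running
   through O while traversing the columns {x} x Y alternately along I and its
   reverse (the "snake") is a Hamiltonian path of X x Y; it ends at the end of I
   when |O| is odd and at the start of I otherwise.
   For odd q, snaking the 0 -> 1 path of Z_q against a 0 -> 1 path of Z_q^n
   gives a 0 -> 1 path of Z_q^(n+1).  For even q every size is even and the
   snake cannot change the inner endpoint, so two coordinates are added at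
   once: with P a 0 -> 1 path of Z_q^n (n odd), snake P minus its last vertex,
   of odd size q^n - 1, against a path of Z_q^2 from 00 to 10, then finish
   with the column {1} x Z_q^2 along a path from 10 to 11. *)

Lemma head_rev (T : Type) (x : T) s : head x (rev s) = last x s.
Proof. by case/lastP: s => // s y; rewrite rev_rcons last_rcons. Qed.

Lemma last_rev (T : Type) (x : T) s : last x (rev s) = head x s.
Proof. by case: s => // y s; rewrite rev_cons last_rcons. Qed.

Lemma sorted_cat_adj (T : eqType) (e : rel T) z s1 s2 :
  s1 != [::] -> s2 != [::] ->
  sorted e s1 -> sorted e s2 -> e (last z s1) (head z s2) -> sorted e (s1 ++ s2).
Proof.
by case: s1 => // x s1 _; case: s2 => //= y s2 _; rewrite cat_path /= => -> -> ->.
Qed.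

Lemma mem_map_pair (X Y : eqType) (x' : X) (I : seq Y) x y :
  ((x, y) \in map (pair x') I) = (x == x') && (y \in I).
Proof.
apply/mapP/andP => [[y' y'I [-> ->]] | [/eqP -> yI]]; first by rewrite eqxx.
by exists y.
Qed.

Definition ham_path (T : finType) (e : rel T) (s : seq T) (a b : T) :=
  [/\ sorted e s, uniq s, (forall x, x \in s), head a s = a & last a s = b].

Section HamPath.
Variables (T : finType) (e : rel T).
Implicit Types (s : seq T) (a b : T).

Lemma ham_path_head s a b : ham_path e s a b -> s = a :: behead s.
Proof. by case: s => [[_ _ /(_ a)] // | x s [_ _ _ /= ->]]. Qed.

Lemma ham_path_size s a b : ham_path e s a b -> size s = #|T|.
Proof.
by case=> _ /card_uniqP <- cover _ _; apply: eq_card => x; rewrite cover.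
Qed.

Lemma uniq_cover_size s : (forall x, x \in s) -> size s = #|T| -> uniq s.
Proof.
move=> cover size_s; apply/card_uniqP; rewrite size_s.
by apply: eq_card => x; rewrite cover.
Qed.

Lemma ham_path_rev s a b : symmetric e -> ham_path e s a b -> ham_path e (rev s) b a.
Proof.
move=> e_sym; case: s => [/ham_path_head // | x s] [s_sorted s_uniq cover /= <- s_last].
split; rewrite ?head_rev ?last_rev //.
- by rewrite rev_sorted; apply: sub_sorted s_sorted => y z; rewrite e_sym.
- by rewrite rev_uniq.
- by move=> y; rewrite mem_rev.
Qed.

Lemma ham_path_map (U : finType) (e' : rel U) (f : T -> U) s a b :
  injective f -> #|U| <= #|T| -> {homo f : x y / e x y >-> e' x y} ->
  ham_path e s a b -> ham_path e' (map f s) (f a) (f b).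
Proof.
move=> f_inj card_U f_homo [s_sorted s_uniq cover s_head s_last]; split.
- by rewrite sorted_map; apply: sub_sorted s_sorted.
- by rewrite map_inj_uniq.
- by move=> y; have /codomP[x ->] := inj_card_onto f_inj card_U y; rewrite mem_map.
- by case: s s_head {s_sorted s_uniq cover s_last} => //= x s ->.
- by rewrite last_map s_last.
Qed.

End HamPath.

Section CartesianProduct.
Variables (X Y : finType) (eX : rel X) (eY : rel Y).

Definition prod_adj : rel (X * Y) := fun u v =>
  eX u.1 v.1 && (u.2 == v.2) || (u.1 == v.1) && eY u.2 v.2.

Lemma sorted_map_pair x I : sorted eY I -> sorted prod_adj (map (pair x) I).
Proof.
by rewrite sorted_map; apply: sub_sorted => y z yz; rewrite /prod_adj /= eqxx yz orbT.
Qed.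

Fixpoint snake (O : seq X) (I : seq Y) : seq (X * Y) :=
  if O is x :: O' then map (pair x) I ++ snake O' (rev I) else [::].

Lemma snake_cons x O I : snake (x :: O) I = map (pair x) I ++ snake O (rev I).
Proof. by []. Qed.

Lemma mem_snake O I x y : ((x, y) \in snake O I) = (x \in O) && (y \in I).
Proof.
elim: O I => [|x' O IH] I //=.
by rewrite mem_cat IH mem_rev in_cons mem_map_pair andb_orl.
Qed.

Lemma uniq_snake O I : uniq O -> uniq I -> uniq (snake O I).
Proof.
elim: O I => [|x O IH] I //= /andP[xO O_uniq] I_uniq.
rewrite cat_uniq IH ?rev_uniq // map_inj_uniq ?I_uniq; last by move=> y z [].
rewrite andbT /=; apply/hasPn => -[x' y]; rewrite mem_snake => /andP[x'O _].
by rewrite mem_map_pair; apply: contraNN xO => /andP[/eqP <-].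
Qed.

Lemma snake_nil O I : O != [::] -> I != [::] -> snake O I != [::].
Proof. by case: O => // x O _; case: I. Qed.

Lemma head_snake O I u : O != [::] -> I != [::] ->
  head u (snake O I) = (head u.1 O, head u.2 I).
Proof. by case: O => // x O _; case: I. Qed.

Lemma last_snake O I u : O != [::] -> I != [::] ->
  last u (snake O I) = (last u.1 O, if odd (size O) then last u.2 I else head u.2 I).
Proof.
elim: O u I => // x [|x' O] IH u I _ I_nil.
  by rewrite /= cats0 -(last_map (pair x)) /=; case: I I_nil.
have rI_nil : rev I != [::] by rewrite -size_eq0 size_rev size_eq0.
rewrite [snake _ _]/= last_cat IH // last_rev head_rev /=.
by case: I I_nil {rI_nil} => // y I _; case: (odd (size O)).
Qed.

Lemma sorted_snake O I : symmetric eY -> sorted eX O -> sorted eY I ->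
  sorted prod_adj (snake O I).
Proof.
move=> eY_sym; elim: O I => // x O IH I xO_sorted I_sorted.
have rI_sorted : sorted eY (rev I).
  by rewrite rev_sorted; apply: sub_sorted I_sorted => y z; rewrite eY_sym.
have O_snake := IH _ (path_sorted xO_sorted) rI_sorted; rewrite snake_cons.
case: I I_sorted rI_sorted O_snake => [|y I] I_sorted rI_sorted O_snake.
  exact: O_snake.
case: O xO_sorted {IH} O_snake => [|x' O] xO_sorted O_snake.
  by rewrite cats0; apply: sorted_map_pair.
have rI_nil : rev (y :: I) != [::] by rewrite rev_cons; case: (rev I).
apply: (@sorted_cat_adj _ _ (x, y)) => //; first exact: snake_nil.
  exact: sorted_map_pair.
rewrite head_snake // (last_map (pair x)) head_rev /prod_adj /= eqxx andbT.
by case/andP: xO_sorted => ->.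
Qed.

Lemma ham_path_snake O I a b c d : symmetric eY ->
  ham_path eX O a b -> ham_path eY I c d ->
  ham_path prod_adj (snake O I) (a, c) (b, if odd (size O) then d else c).
Proof.
move=> eY_sym O_ham I_ham.
have O_nil : O != [::] by rewrite (ham_path_head O_ham).
have I_nil : I != [::] by rewrite (ham_path_head I_ham).
case: O_ham I_ham => [O_sorted O_uniq O_cover O_head O_last].
case=> [I_sorted I_uniq I_cover I_head I_last]; split.
- exact: sorted_snake.
- exact: uniq_snake.
- by case=> x y; rewrite mem_snake O_cover I_cover.
- by rewrite head_snake // O_head I_head.
- by rewrite last_snake // O_last I_last I_head.
Qed.

(* The path is the snake of [P] minus its last vertex [b] against [A],
   followed by the column {b} x Y traversed along [C]. *)
Lemma ham_path_turn P a b A y0 ym C y1 : symmetric eY -> a != b ->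
  ham_path eX P a b -> ham_path eY A y0 ym ->
  ham_path eY C (if odd (size P) then y0 else ym) y1 ->
  exists S, ham_path prod_adj S (a, y0) (b, y1).
Proof.
move=> eY_sym neq_ab [P_sorted P_uniq P_cover P_head P_last].
case: A => [/ham_path_head // | y A] [A_sorted A_uniq A_cover /= yy0 /= A_last]; subst y.
case/lastP: P P_sorted P_uniq P_cover P_head P_last => [_ _ /(_ a) //|B b'].
rewrite last_rcons size_rcons => P_sorted P_uniq P_cover P_head b'b; subst b'.
case: B P_sorted P_uniq P_cover P_head => [_ _ _ /= ba | x B].
  by rewrite ba eqxx in neq_ab.
rewrite [sorted _ _]/= rcons_path rcons_uniq.
move=> /andP[B_path B_b] /andP[bB B_uniq] P_cover /= xa; subst x.
set yc := if _ then y0 else ym.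
case: C => [/ham_path_head // | y C] [C_sorted C_uniq C_cover /= yyc C_last].
exists (snake (a :: B) (y0 :: A) ++ map (pair b) (y :: C)); split.
- apply: (@sorted_cat_adj _ _ (b, y0)) => //.
  + exact: sorted_snake.
  + exact: sorted_map_pair.
  rewrite last_snake //= A_last /prod_adj /= B_b yyc /yc.
  by case: (odd (size B)); rewrite eqxx.
- rewrite cat_uniq uniq_snake // map_inj_uniq ?C_uniq; last by move=> z z' [].
  rewrite andbT; apply/hasPn => -[x z]; rewrite mem_map_pair => /andP[/eqP -> _].
  by rewrite mem_snake negb_and bB.
- move=> [x z]; rewrite mem_cat mem_snake mem_map_pair A_cover C_cover !andbT.
  by have := P_cover x; rewrite mem_rcons in_cons orbC.
- by [].
- by rewrite last_cat /= (last_map (pair b)) C_last.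
Qed.
End CartesianProduct.

Lemma ham_path_swap (X Y : finType) (eX : rel X) (eY : rel Y) S u v :
  ham_path (prod_adj eX eY) S u v ->
  ham_path (prod_adj eY eX) (map swap_pair S) (swap_pair u) (swap_pair v).
Proof.
apply: ham_path_map; first exact: can_inj swap_pairK.
  by rewrite !card_prod mulnC.
by move=> [x y] [x' y']; rewrite /prod_adj /= => /orP[] /andP[-> ->]; rewrite ?orbT.
Qed.

Section LeeGraph.
Variable q : nat.

Lemma lee_symC (a b : 'I_q) : lee_sym a b = lee_sym b a.
Proof. by rewrite /lee_sym; case: (leqP a b) => ab; case: (leqP b a) => ba; lia. Qed.

Lemma lee_symxx (a : 'I_q) : lee_sym a a = 0.
Proof. by rewrite /lee_sym leqnn subnn min0n. Qed.

Lemma lee_distC n (u v : word q n) : lee_dist u v = lee_dist v u.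
Proof. by apply: eq_bigr => i _; rewrite lee_symC. Qed.

Lemma lee_distxx n (u : word q n) : lee_dist u u = 0.
Proof. by rewrite /lee_dist big1 // => i _; rewrite lee_symxx. Qed.

Lemma lee_dist_cat m n (t t' : word q m) (u u' : word q n) :
  lee_dist [tuple of t ++ u] [tuple of t' ++ u'] = lee_dist t t' + lee_dist u u'.
Proof.
rewrite /lee_dist big_split_ord /=.
by congr (_ + _); apply: eq_bigr => i _; rewrite ?tnth_lshift ?tnth_rshift.
Qed.

Definition lee_adj n : rel (word q n) := fun u v => lee_dist u v == 1.
Arguments lee_adj n : clear implicits.

Lemma lee_adj_sym n : symmetric (lee_adj n).
Proof. by move=> u v; rewrite /lee_adj lee_distC. Qed.

Definition cat_word m n (p : word q m * word q n) : word q (m + n) :=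
  [tuple of p.1 ++ p.2].

Lemma cat_word_inj m n : injective (@cat_word m n).
Proof.
move=> [t u] [t' u'] /(congr1 val) /eqP; rewrite /= eqseq_cat ?size_tuple //.
by case/andP=> /eqP/val_inj -> /eqP/val_inj ->.
Qed.

Lemma ham_path_cat_word m n S u v :
  ham_path (prod_adj (lee_adj m) (lee_adj n)) S u v ->
  ham_path (lee_adj (m + n)) (map (@cat_word m n) S) (cat_word u) (cat_word v).
Proof.
apply: ham_path_map; first exact: cat_word_inj.
  by rewrite card_prod !card_tuple expnD.
move=> [t u'] [t' u'']; rewrite /prod_adj /lee_adj /= lee_dist_cat.
by case/orP=> /andP[/eqP -> /eqP ->]; rewrite lee_distxx.
Qed.

Definition const_word n (c : 'I_q) : word q n := [tuple of nseq n c].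

Lemma const_wordP n (c : 'I_q) : is_const_word c (const_word n c).
Proof. by apply/forallP => i; rewrite (tnth_nth c) nth_nseq ltn_ord. Qed.

Lemma lee_dist_const n (a b : 'I_q) :
  lee_dist (const_word n a) (const_word n b) = n * lee_sym a b.
Proof.
rewrite /lee_dist (eq_bigr (fun=> lee_sym a b)) ?sum_nat_const ?card_ord // => i _.
by rewrite !(tnth_nth a) !nth_nseq ltn_ord.
Qed.

Lemma cat_word_const m n c :
  cat_word (const_word m c, const_word n c) = const_word (m + n) c.
Proof. by apply: val_inj; rewrite /= nseqD. Qed.

Lemma const_word_inj n : 0 < n -> injective (@const_word n).
Proof. by case: n => // n _ c c' /(congr1 val) []. Qed.

Hypothesis q_gt1 : 1 < q.

Lemma lee_sym_ordS (a : 'I_q) : lee_sym a (ordS a) = 1.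
Proof.
have := ltn_ord a; rewrite /lee_sym /= leq_eqVlt => /orP[/eqP aq | lt_aq].
  have -> : a.+1 %% q = 0 by rewrite aq modnn.
  by case: leqP; lia.
by rewrite modn_small //; case: leqP; lia.
Qed.

Definition ord_zero : 'I_q := Ordinal (ltnW q_gt1).
Definition ord_one : 'I_q := Ordinal q_gt1.

Lemma val_iter_ordS k (a : 'I_q) : val (iter k (@ordS q) a) = (a + k) %% q.
Proof.
elim: k => [|k IH]; first by rewrite addn0 modn_small.
by rewrite iterS /= IH -addn1 modnDml addn1 addnS.
Qed.

Lemma ham_path_ordS :
  ham_path (frel (@ordS q)) (traject (@ordS q) ord_one q) ord_one ord_zero.
Proof.
have cover : forall a, a \in traject (@ordS q) ord_one q.
  move=> a; apply/trajectP; exists ((a + q.-1) %% q); first exact: ltn_pmod (ltnW q_gt1).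
  apply: val_inj; rewrite val_iter_ordS /= modnDmr addnA addnAC add1n.
  by rewrite prednK ?(ltnW q_gt1) // modnDl modn_small.
split => //.
- apply/(sortedP ord_one) => i; rewrite size_traject => lt_iq.
  by rewrite !nth_traject ?(ltnW lt_iq) // iterS /=.
- by apply: uniq_cover_size; rewrite // size_traject card_ord.
- by rewrite -nth0 nth_traject // (ltnW q_gt1).
- rewrite -nth_last size_traject nth_traject ?prednK ?(ltnW q_gt1) //.
  by apply: val_inj; rewrite val_iter_ordS /= add1n prednK ?(ltnW q_gt1) // modnn.
Qed.

Definition lee_gray n := exists s,
  ham_path (lee_adj n) s (const_word n ord_zero) (const_word n ord_one).

Lemma lee_gray1 : lee_gray 1.
Proof.
exists (rev (map (const_word 1) (traject (@ordS q) ord_one q))).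
apply: ham_path_rev; first exact: lee_adj_sym.
apply: ham_path_map ham_path_ordS; first exact: const_word_inj.
  by rewrite card_tuple expn1.
by move=> a _ /eqP <-; rewrite /lee_adj lee_dist_const mul1n lee_sym_ordS.
Qed.

Lemma lee_gray_odd_step n : odd q -> lee_gray n -> lee_gray n.+1.
Proof.
move=> q_odd [s s_ham]; have [c c_ham] := lee_gray1.
have := ham_path_cat_word (ham_path_snake (@lee_adj_sym n) c_ham s_ham).
rewrite (ham_path_size c_ham) card_tuple card_ord expn1 q_odd !cat_word_const.
by exists (map (@cat_word 1 n) (snake c s)).
Qed.

Lemma lee_gray_even_step n : ~~ odd q -> odd n -> lee_gray n -> lee_gray n.+2.
Proof.
move=> q_even n_odd [s s_ham]; have [c c_ham] := lee_gray1.
have size_c : size c = q by rewrite (ham_path_size c_ham) card_tuple card_ord expn1.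
(* In Z_q^2, [A] runs from 00 to 10 and [C] from 10 to 11. *)
have A_ham := ham_path_cat_word (ham_path_snake (@lee_adj_sym 1) c_ham c_ham).
rewrite size_c (negPf q_even) cat_word_const in A_ham.
have C_ham := ham_path_cat_word (ham_path_swap
  (ham_path_snake (@lee_adj_sym 1) c_ham (ham_path_rev (@lee_adj_sym 1) c_ham))).
rewrite /= size_c (negPf q_even) cat_word_const in C_ham.
have neq01 : const_word n ord_zero != const_word n ord_one.
  by rewrite (inj_eq (const_word_inj (odd_gt0 n_odd))).
have s_even : ~~ odd (size s).
  rewrite (ham_path_size s_ham) card_tuple card_ord oddX (negPf q_even).
  by rewrite eqn0Ngt odd_gt0.
have := ham_path_turn (@lee_adj_sym 2) neq01 s_ham A_ham.
rewrite (negPf s_even) => /(_ _ _ C_ham) [S /ham_path_swap /ham_path_cat_word].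
rewrite /= !cat_word_const => S_ham.
by exists (map (@cat_word 2 n) (map swap_pair S)).
Qed.

Lemma lee_gray_odd n : odd n -> lee_gray n.
Proof.
have [q_odd | q_even] := boolP (odd q).
  case: n => // n _; elim: n => [|n IH]; [exact: lee_gray1 | exact: lee_gray_odd_step].
move=> n_odd; rewrite -(odd_double_half n) n_odd.
elim: n./2 => [|k IH]; first exact: lee_gray1.
by apply: lee_gray_even_step; rewrite //= odd_double.
Qed.
End LeeGraph.

Theorem lemma3 (n q : nat) (Hn : odd n) (Hq : 3 <= q) :
  exists (s : seq (word q n)) (w0 : word q n),
    [/\ perm_eq s (enum [set: word q n]),
        (forall i, i.+1 < size s ->
           lee_dist (nth w0 s i) (nth w0 s i.+1) = 1),
        s = w0 :: behead s,
        is_const_word 0 w0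
      & is_const_word 1 (last w0 s)].
Proof.
have q_gt1 : 1 < q := ltnW Hq.
have [s s_ham] := lee_gray_odd q_gt1 Hn.
have [/(sortedP (const_word n (ord_zero q_gt1))) s_adj s_uniq s_cover _ s_last] := s_ham.
exists s, (const_word n (ord_zero q_gt1)); split.
- by apply: uniq_perm; rewrite ?enum_uniq // => w; rewrite mem_enum in_setT s_cover.
- by move=> i /s_adj /eqP.
- exact: ham_path_head s_ham.
- exact: const_wordP.
- by rewrite s_last; exact: const_wordP.
Qed.
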